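(* Let there be $k$ bidders and $n$ items, bidder $i$ having additive valuation with private values $v_{ij}\ge0$ drawn from publicly known independent distributions. Let $s^*=\mathbb{E}[\sum_j\max_i v_{ij}]$ and define the reserve-welfare mechanism: set the reserve welfare $\hat s=(1-\epsilon)s^*$; given bids $b_{ij}$, if $\sum_j\max_i b_{ij}<\hat s$ then no item is allocated and nobody pays; otherwise allocate the items according to an allocation $(S_1,\dots,S_k)$ (disjoint sets of items) maximizing $\sum_i\sum_{j\in S_i}b_{ij}$ and charge each bidder $i$ the price $p_i=\hat s-\sum_{\ell\ne i}\sum_{j\in S_\ell}b_{\ell j}$. If $\sum_j\max_i v_{ij}$ is $(\epsilon,\delta)$-concentrated for constants $\frac13>\epsilon>0$ and $1>\delta>0$, then the reserve-welfare mechanism is deterministically truthful, individually rational, and its expected revenue is at least $(1-k\epsilon-k\delta)\,s^*$.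
   Context: A random variable $X$ is $(\epsilon,\delta)$-concentrated if $X\in((1-\epsilon)\mathbb{E}[X],(1+\epsilon)\mathbb{E}[X])$ with probability at least $1-\delta$. Bidder $i$'s utility is $\sum_{j\in S_i}v_{ij}-p_i$ (zero if nothing is allocated and nothing paid). Deterministically truthful: for every $i$ and every bids of the others, reporting $v_i$ maximizes bidder $i$'s utility. Individually rational: truthful reporting always gives nonnegative utility. Expected revenue: $\mathbb{E}[\sum_i p_i]$ under truthful bidding. *)

From HB Require Import structures.
From mathcomp Require Import all_boot all_order all_algebra.
From mathcomp Require Import all_classical all_reals all_analysis.

Set Implicit Arguments.
Unset Strict Implicit.
Unset Printing Implicit Defensive.

Import Order.TTheory GRing.Theory Num.Theory.
Local Open Scope classical_set_scope.
Local Open Scope ring_scope.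

Section Auction.
Variables (R : realType) (k n : nat).

(* A bid (or valuation) profile: b i j = bid of bidder i for item j. *)
Definition profile := 'I_k -> 'I_n -> R.

Definition nonneg_profile (b : profile) := forall i j, 0 <= b i j.
Definition nonneg_row (vi : 'I_n -> R) := forall j, 0 <= vi j.

(* An allocation assigns each item to at most one bidder; S_i = [j | a j = Some i]. *)
Definition allocation := 'I_n -> option 'I_k.

Definition alloc_welfare (a : allocation) (b : profile) : R :=
  \sum_(i < k) \sum_(j < n | a j == Some i) b i j.

Definition is_max_alloc (a : allocation) (b : profile) :=
  forall a' : allocation, alloc_welfare a' b <= alloc_welfare a b.

(* sum_j max_i b_ij (bids are nonnegative, so 0 is a neutral default) *)
Definition opt_welfare (b : profile) : R :=
  \sum_(j < n) \big[Num.max/0]_(i < k) b i j.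

(* Reserve-welfare mechanism with reserve welfare shat and tie-breaking
   allocation rule A (A b is some welfare-maximizing allocation for b). *)
Definition allocated (shat : R) (b : profile) : bool := shat <= opt_welfare b.

Definition rw_price (shat : R) (A : profile -> allocation) (b : profile) (i : 'I_k) : R :=
  if allocated shat b then
    shat - \sum_(l < k | l != i) \sum_(j < n | A b j == Some l) b l j
  else 0.

Definition rw_value (shat : R) (A : profile -> allocation) (b : profile)
  (i : 'I_k) (vi : 'I_n -> R) : R :=
  if allocated shat b then \sum_(j < n | A b j == Some i) vi j else 0.

Definition rw_utility shat A (b : profile) i (vi : 'I_n -> R) : R :=
  rw_value shat A b i vi - rw_price shat A b i.

Definition rw_revenue shat A (b : profile) : R :=
  \sum_(i < k) rw_price shat A b i.

Definition upd (b : profile) (i : 'I_k) (bi : 'I_n -> R) : profile :=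
  fun l => if l == i then bi else b l.

Definition deterministically_truthful shat A :=
  forall (b : profile) (i : 'I_k) (vi bi : 'I_n -> R),
    nonneg_profile b -> nonneg_row vi -> nonneg_row bi ->
    rw_utility shat A (upd b i bi) i vi <= rw_utility shat A (upd b i vi) i vi.

Definition individually_rational shat A :=
  forall (b : profile) (i : 'I_k) (vi : 'I_n -> R),
    nonneg_profile b -> nonneg_row vi ->
    0 <= rw_utility shat A (upd b i vi) i vi.

End Auction.

Section Prob.
Context {d : measure_display} {T : measurableType d} {R : realType}.

Definition mutually_independent (I : finType) (P : probability T R)
  (X : I -> {RV P >-> R}) :=
  forall B : I -> set R, (forall i, measurable (B i)) ->
    P (\bigcap_(i in [set: I]) (X i @^-1` B i)) =
    (\prod_(i : I) P (X i @^-1` B i))%E.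


(* (eps,delta)-concentration; E[X] is required to be finite (a real number). *)
Definition concentrated (P : probability T R) (X : T -> R) (eps delta : R) :=
  exists m : R, ('E_P[X])%E = m%:E /\
    ((1 - delta)%:E <= P [set w | ((1 - eps) * m < X w < (1 + eps) * m)%R])%E.

End Prob.
Arguments mutually_independent {d T R I} P X.

(* Charging bidder i the reserve shat minus the others' reported welfare makes
   her utility, when the mechanism allocates, the welfare of the chosen
   allocation evaluated at her true values minus shat.  Truthful bidding thus
   yields max (OPT - shat, 0) with OPT the optimal welfare of the true profile,
   and no misreport can do better since no allocation beats OPT.  When the
   mechanism allocates, the k prices add up to k shat - (k - 1) OPT, so the
   revenue is 1{W >= shat} (k shat - (k - 1) W) with W = sum_j max_i v_ij.
   Concentration gives P (W >= shat) >= 1 - delta, hence the expected revenue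
   is at least k shat (1 - delta) - (k - 1) s* >= (1 - k eps - k delta) s*.
   Independence of the values is not needed, and eps < 1/3 only through eps < 1. *)
From HB Require Import structures.
From mathcomp Require Import all_boot all_order all_algebra.
From mathcomp Require Import all_classical all_reals all_analysis.
From mathcomp Require Import lra.
Import Order.TTheory GRing.Theory Num.Theory.
Import measurable_realfun.

Set Implicit Arguments.
Unset Strict Implicit.
Unset Printing Implicit Defensive.
Local Open Scope classical_set_scope.
Local Open Scope ring_scope.

Section welfare.
Variables (R : realType) (k n : nat).
Implicit Types (b : profile R k n) (a : allocation k n).

Lemma alloc_welfareE a b :
  alloc_welfare a b = \sum_(j < n) if a j is Some i then b i j else 0.
Proof.
rewrite /alloc_welfare; under eq_bigr do rewrite big_mkcond /=.
rewrite exchange_big /=; apply: eq_bigr => j _.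
case: (a j) => [i0|]; last by rewrite big1.
rewrite (bigD1 i0) //= eqxx big1 ?addr0 // => i /negbTE Hi.
by case: eqP => // -[] Ei; rewrite Ei eqxx in Hi.
Qed.

Lemma opt_welfare_ge0 b : 0 <= opt_welfare b.
Proof. by apply: sumr_ge0 => j _; apply/bigmax_geP; left. Qed.

Lemma alloc_welfare_le_opt a b :
  nonneg_profile b -> alloc_welfare a b <= opt_welfare b.
Proof.
move=> b_ge0; rewrite alloc_welfareE; apply: ler_sum => j _.
case: (a j) => [i|]; first exact: (le_bigmax 0 (fun i => b i j) i).
by apply/bigmax_geP; left.
Qed.

Lemma exists_alloc_welfare_opt b :
  nonneg_profile b -> exists a, opt_welfare b <= alloc_welfare a b.
Proof.
move=> b_ge0; case: (pickP (fun _ : 'I_k => true)) => [i0 _|no_bidder].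
  exists (fun j => Some [arg max_(i > i0) b i j]%O).
  rewrite alloc_welfareE; apply: ler_sum => j _.
  case: (@arg_maxP _ _ _ i0 xpredT (fun i => b i j)) => // i _ i_max.
  by apply: bigmax_le => // l _; apply: i_max.
exists (fun=> None); rewrite alloc_welfareE.
by apply: ler_sum => j _; rewrite big_pred0.
Qed.

Lemma max_alloc_welfare a b :
  nonneg_profile b -> is_max_alloc a b -> alloc_welfare a b = opt_welfare b.
Proof.
move=> b_ge0 a_max; apply/eqP; rewrite eq_le alloc_welfare_le_opt //.
by have [a' /le_trans] := exists_alloc_welfare_opt b_ge0; apply.
Qed.

Lemma opt_welfare_no_bidder b : k = 0%N -> opt_welfare b = 0.
Proof.
move=> k0; apply: big1 => j _; apply: big_pred0 => i.
by case: i => i; rewrite k0.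
Qed.

End welfare.

Lemma sum_sum_neq (R : pzRingType) (I : finType) (F : I -> R) :
  \sum_i \sum_(j | j != i) F j = (#|I|%:R - 1) * \sum_i F i.
Proof.
have sum_neq i : \sum_(j | j != i) F j = \sum_j F j - F i.
  by rewrite [X in _ = X - _](bigD1 i) //= addrC addrK.
by under eq_bigr do rewrite sum_neq; rewrite sumrB sumr_const mulrBl mul1r mulr_natl.
Qed.

Lemma upd_upd (R : realType) k n (b : profile R k n) i x y :
  upd (upd b i x) i y = upd b i y.
Proof. by apply: boolp.funext => l; rewrite /upd; case: (l == i). Qed.

Lemma upd_nonneg (R : realType) k n (b : profile R k n) i vi :
  nonneg_profile b -> nonneg_row vi -> nonneg_profile (upd b i vi).
Proof. by move=> b_ge0 vi_ge0 l j; rewrite /upd; case: ifP. Qed.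

Section reserve_welfare_mechanism.
Variables (R : realType) (k n : nat) (shat : R) (A : profile R k n -> allocation k n).
Hypothesis A_max : forall b, nonneg_profile b -> is_max_alloc (A b) b.
Implicit Types (b : profile R k n).

Lemma rw_utilityE b i vi : rw_utility shat A b i vi =
  if allocated shat b then alloc_welfare (A b) (upd b i vi) - shat else 0.
Proof.
rewrite /rw_utility /rw_value /rw_price; case: ifP => _; last by rewrite subr0.
rewrite /alloc_welfare [in RHS](bigD1 i) //= /upd eqxx opprB addrA.
by congr (_ + _ - _); apply: eq_bigr => l /negbTE ->.
Qed.

Lemma rw_utility_le b i vi : nonneg_profile b -> nonneg_row vi ->
  rw_utility shat A b i vi <= Num.max (opt_welfare (upd b i vi) - shat) 0.
Proof.
move=> b_ge0 vi_ge0; rewrite rw_utilityE le_max.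
case: allocated; last by rewrite lexx orbT.
by rewrite lerD2r alloc_welfare_le_opt //; exact: upd_nonneg.
Qed.

Lemma rw_utility_truthful b i vi : nonneg_profile b -> nonneg_row vi ->
  rw_utility shat A (upd b i vi) i vi = Num.max (opt_welfare (upd b i vi) - shat) 0.
Proof.
move=> b_ge0 vi_ge0; have c_ge0 := upd_nonneg i b_ge0 vi_ge0.
rewrite rw_utilityE upd_upd (max_alloc_welfare c_ge0 (A_max c_ge0)) /allocated.
case: leP => [shat_le | shat_gt]; first by apply/esym/max_idPl; rewrite subr_ge0.
by apply/esym/max_idPr; rewrite subr_le0 ltW.
Qed.

Lemma rw_truthful : deterministically_truthful shat A.
Proof.
move=> b i vi bi b_ge0 vi_ge0 bi_ge0.
rewrite rw_utility_truthful //.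
by have := rw_utility_le i (upd_nonneg i b_ge0 bi_ge0) vi_ge0; rewrite upd_upd.
Qed.

Lemma rw_individually_rational : individually_rational shat A.
Proof.
by move=> b i vi b_ge0 vi_ge0; rewrite rw_utility_truthful // le_max lexx orbT.
Qed.

Lemma rw_revenueE b : nonneg_profile b -> rw_revenue shat A b =
  (allocated shat b)%:R * (k%:R * shat - (k%:R - 1) * opt_welfare b).
Proof.
move=> b_ge0; rewrite /rw_revenue /rw_price.
case: allocated; last by rewrite mul0r big1.
rewrite mul1r -(max_alloc_welfare b_ge0 (A_max b_ge0)) /alloc_welfare.
by rewrite sumrB sumr_const sum_sum_neq card_ord mulr_natl.
Qed.

Lemma rw_revenue_no_bidder b : k = 0%N -> rw_revenue shat A b = 0.
Proof. by move=> k0; apply: big_pred0 => i; case: i => i; rewrite k0. Qed.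

End reserve_welfare_mechanism.

Lemma measurable_bigmaxr d (T : measurableType d) (R : realType) (I : Type)
    (s : seq I) (F : I -> T -> R) :
  (forall i, measurable_fun setT (F i)) ->
  measurable_fun setT (fun w => \big[Num.max/0]_(i <- s) F i w).
Proof.
move=> mF; elim: s => [|i s IHs].
  by under eq_fun do rewrite big_nil; exact: measurable_cst.
by under eq_fun do rewrite big_cons; exact: measurable_maxr.
Qed.

Lemma measurable_opt_welfare d (T : measurableType d) (R : realType) k n
    (V : T -> profile R k n) :
  (forall i j, measurable_fun setT (fun w => V w i j)) ->
  measurable_fun setT (fun w => opt_welfare (V w)).
Proof. by move=> mV; apply: measurable_sum => j; exact: measurable_bigmaxr. Qed.

Lemma concentrated_lower_tail d (T : measurableType d) (R : realType)
    (P : probability T R) (W : T -> R) (m eps delta : R) :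
  measurable_fun setT W ->
  ((1 - delta)%:E <= P [set w | ((1 - eps) * m < W w < (1 + eps) * m)%R])%E ->
  ((1 - delta)%:E <= P (W @^-1` `[((1 - eps) * m)%R, +oo[))%E.
Proof.
move=> mW /le_trans; apply; apply: le_measure; rewrite ?inE.
- rewrite -[X in measurable X]setTI.
  exact: (mW _ _ (measurable_itv `](1 - eps) * m, (1 + eps) * m[)).
- by rewrite -[X in measurable X]setTI; exact: mW.
- by move=> w /= /andP[/ltW + _]; rewrite in_itv /= andbT.
Qed.

Section threshold_expectation.
Context d (T : measurableType d) (R : realType) (P : probability T R).
Variables (W : T -> R) (s c a : R).
Hypotheses (mW : measurable_fun setT W) (W_ge0 : forall w, 0 <= W w)
  (W_fin : ('E_P[W])%E \is a fin_num) (a_ge0 : 0 <= a).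

Let S := W @^-1` `[s, +oo[.

Let mS : measurable S.
Proof. by rewrite -[S]setTI; exact: mW. Qed.

Let indicS w : \1_S w = (s <= W w)%R%:R :> R.
Proof.
rewrite indicE; suff -> : (w \in S) = (s <= W w)%R by [].
apply/idP/idP => H; [move/set_mem: H | apply: mem_set].
all: by rewrite /S /= in_itv /= andbT.
Qed.

Let intW : P.-integrable setT (EFin \o W).
Proof.
apply/integrableP; split; first exact/measurable_EFinP.
under eq_integral do rewrite /= ger0_norm //.
by move: W_fin; rewrite unlock ge0_fin_numE ?integral_ge0 // => w _; rewrite lee_fin.
Qed.

Lemma indic_affine_lower w : c * \1_S w - a * W w <= \1_S w * (c - a * W w).
Proof.
rewrite indicE; case: (w \in S); rewrite ?mul1r ?mulr1 // !mul0r mulr0 sub0r.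
by rewrite oppr_le0 mulr_ge0.
Qed.

Lemma integrable_indic_affine :
  P.-integrable setT (fun w => (\1_S w * (c - a * W w))%:E).
Proof.
have intB : P.-integrable setT (fun w => (`|c| + a * W w)%:E).
  apply: (eq_integrable measurableT _ _ _ (integrableD measurableT
    (finite_measure_integrable_cst P `|c| measurableT)
    (integrableZl measurableT a intW))) => w _.
  by rewrite /= EFinD EFinM.
apply: (@le_integrable _ _ _ P _ measurableT _ _ _ _ intB).
- apply/measurable_EFinP; apply: measurable_funM; first exact: measurable_indic.
  by apply: measurable_funB; [exact: measurable_cst | exact: measurable_funM].
- move=> w _; rewrite !abse_EFin lee_fin.
  have aW_ge0 : 0 <= a * W w by rewrite mulr_ge0.
  rewrite (ger0_norm (addr_ge0 _ aW_ge0)) // normrM indicE; case: (w \in S).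
    by rewrite normr1 mul1r (le_trans (ler_normB _ _)) // (ger0_norm aW_ge0).
  by rewrite normr0 mul0r addr_ge0.
Qed.

Lemma expectation_threshold_affine_ge :
  (c%:E * P (W @^-1` `[s, +oo[) - a%:E * 'E_P[W]
    <= 'E_P[fun w => ((s <= W w)%R%:R * (c - a * W w))%R])%E.
Proof.
have intS : P.-integrable setT (fun w => c%:E * (\1_S w)%:E)%E.
  exact: integrableZl (integrable_indic P mS).
have intaW : P.-integrable setT (fun w => a%:E * (W w)%:E)%E.
  exact: integrableZl intW.
have -> : P S = (\int[P]_w (\1_S w)%:E)%E by rewrite integral_indic // setIT.
rewrite unlock -(integralZl _ (integrable_indic P mS)) // -(integralZl _ intW) //.
have <- : (\int[P]_w ((c * \1_S w)%:E - (a * W w)%:E)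
    = \int[P]_w (c%:E * (\1_S w)%:E) - \int[P]_w (a%:E * (W w)%:E))%E.
  by rewrite integralB_EFin.
under [X in (_ <= X)%E]eq_integral do rewrite -indicS.
apply: le_integral integrable_indic_affine _ => //.
- exact: integrableB intS intaW.
- by move=> w _; rewrite -EFinB lee_fin indic_affine_lower.
Qed.

End threshold_expectation.

Theorem theorem7 (d : measure_display) (T : measurableType d) (R : realType)
  (P : probability T R) (k n : nat)
  (v : 'I_k -> 'I_n -> {RV P >-> R})
  (v_ge0 : forall i j w, 0 <= v i j w)
  (v_indep : mutually_independent P (fun ij : 'I_k * 'I_n => v ij.1 ij.2))
  (eps delta : R) (eps_gt0 : 0 < eps) (eps_lt : eps < 1 / 3)
  (delta_gt0 : 0 < delta) (delta_lt1 : delta < 1)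
  (A : profile R k n -> allocation k n)
  (A_max : forall b, nonneg_profile b -> is_max_alloc (A b) b) :
  let V : T -> profile R k n := fun w i j => v i j w in
  let W : T -> R := fun w => opt_welfare (V w) in
  let sstar : R := fine ('E_P[W])%E in
  let shat : R := (1 - eps) * sstar in
  concentrated P W eps delta ->
  [/\ deterministically_truthful shat A,
      individually_rational shat A &
      (((1 - k%:R * eps - k%:R * delta) * sstar)%:E
        <= 'E_P[fun w => rw_revenue shat A (V w)])%E ].
Proof.
move=> V W sstar shat [m [EW W_conc]].
split; [exact: rw_truthful | exact: rw_individually_rational |].
have sstarE : sstar = m by rewrite /sstar EW.
have [k0|k_gt0] := posnP k.
  have W0 : W = cst 0 by apply: boolp.funext => w; exact: opt_welfare_no_bidder.
  move: EW; rewrite sstarE W0 expectation_cst => -[<-]; rewrite mulr0.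
  by apply: expectation_ge0 => w; rewrite rw_revenue_no_bidder.
have mW : measurable_fun setT W.
  by apply: measurable_opt_welfare => i j; exact: measurable_funPT.
have W_ge0 w : 0 <= W w by exact: opt_welfare_ge0.
have W_fin : ('E_P[W])%E \is a fin_num by rewrite EW.
have m_ge0 : 0 <= m by rewrite -lee_fin -EW expectation_ge0.
have eps_lt1 : eps < 1 by rewrite (lt_trans eps_lt) // ltr_pdivrMr // mul1r ltr1n.
have a_ge0 : 0 <= k%:R - 1 :> R by rewrite subr_ge0 ler1n.
have c_ge0 : 0 <= k%:R * shat by rewrite /shat sstarE !mulr_ge0 // subr_ge0 ltW.
have revE : (fun w => rw_revenue shat A (V w))
    = (fun w => (shat <= W w)%R%:R * (k%:R * shat - (k%:R - 1) * W w)).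
  by apply: boolp.funext => w; apply: rw_revenueE => // i j; exact: v_ge0.
have PS : ((1 - delta)%:E <= P (W @^-1` `[shat, +oo[))%E.
  by rewrite /shat sstarE; exact: concentrated_lower_tail.
rewrite revE; apply: le_trans
  (expectation_threshold_affine_ge shat (k%:R * shat) mW W_ge0 W_fin a_ge0).
rewrite EW; apply: (@le_trans _ _ ((k%:R * shat * (1 - delta) - (k%:R - 1) * m)%:E)).
  rewrite lee_fin /shat sstarE.
  have : 0 <= k%:R * eps * delta * m by rewrite !mulr_ge0 // ltW.
  set K : R := k%:R; nra.
by rewrite EFinB EFinM; apply: leeB => //; rewrite EFinM lee_wpmul2l // lee_fin.
Qed.
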